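(* Let $\mathcal{X}$ be a set of feasible solutions and $f_1,\dots,f_m:\mathcal{X}\to\mathbb{R}$ objective functions, $\boldsymbol{f}=(f_1,\dots,f_m)$. Fix an integer $K\ge1$, a preference vector $\boldsymbol{\lambda}$ with $\lambda_i\ge0$, $\sum_{i=1}^m\lambda_i=1$, an ideal point $\boldsymbol{z}^*\in\mathbb{R}^m$, and smoothing parameters $\mu>0$, $\mu_1,\dots,\mu_m>0$. For $X_K=\{\boldsymbol{x}^{(1)},\dots,\boldsymbol{x}^{(K)}\}\subseteq\mathcal{X}$ define the smooth Tchebycheff set scalarization $$g^{(\mathrm{STCH\text{-}Set})}_{\mu,\{\mu_i\}}(X_K\mid\boldsymbol{\lambda})=\mu\log\left(\sum_{i=1}^m\exp\left(\frac{\lambda_i\left(-\mu_i\log\left(\sum_{k=1}^K e^{-f_i(\boldsymbol{x}^{(k)})/\mu_i}\right)-z_i^*\right)}{\mu}\right)\right).$$ Let $X^*_K$ be an optimal solution set, i.e. a minimizer of $g^{(\mathrm{STCH\text{-}Set})}_{\mu,\{\mu_i\}}(\cdot\mid\boldsymbol{\lambda})$ over all sets of $K$ solutions in $\mathcal{X}$. Then every solution in $X^*_K$ is weakly Pareto optimal for $\min_{\boldsymbol{x}\in\mathcal{X}}\boldsymbol{f}(\boldsymbol{x})$. In addition, every solution in $X^*_K$ is Pareto optimal for $\min_{\boldsymbol{x}\in\mathcal{X}}\boldsymbol{f}(\boldsymbol{x})$ if either (1) the optimal solution set $X^*_K$ is unique, or (2) all preference coefficients are positive ($\lambda_i>0$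 for all $i$).
   Context: $\boldsymbol{x}^{(a)}$ dominates $\boldsymbol{x}^{(b)}$ if $f_i(\boldsymbol{x}^{(a)})\le f_i(\boldsymbol{x}^{(b)})$ for all $i$ and $f_j(\boldsymbol{x}^{(a)})<f_j(\boldsymbol{x}^{(b)})$ for some $j$; $\boldsymbol{x}^{(a)}$ strictly dominates $\boldsymbol{x}^{(b)}$ if $f_i(\boldsymbol{x}^{(a)})<f_i(\boldsymbol{x}^{(b)})$ for all $i$. A solution $\boldsymbol{x}^*\in\mathcal{X}$ is Pareto optimal if no $\boldsymbol{x}\in\mathcal{X}$ dominates it, and weakly Pareto optimal if no $\boldsymbol{x}\in\mathcal{X}$ strictly dominates it. *)

From HB Require Import structures.
From mathcomp Require Import all_boot all_order all_algebra.
From mathcomp Require Import all_classical all_reals.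
From mathcomp Require Import all_analysis.
Set Implicit Arguments. Unset Strict Implicit. Unset Printing Implicit Defensive.
Import Order.TTheory GRing.Theory Num.Theory.
Local Open Scope ring_scope.

Section Defs.
Variables (R : realType) (m : nat) (X : Type).

Definition dominates (f : 'I_m -> X -> R) (xa xb : X) : Prop :=
  (forall i, f i xa <= f i xb) /\ (exists j, f j xa < f j xb).

Definition strictly_dominates (f : 'I_m -> X -> R) (xa xb : X) : Prop :=
  forall i, f i xa < f i xb.

(* The feasible set is the whole type X. *)
Definition pareto_optimal (f : 'I_m -> X -> R) (x : X) : Prop :=
  ~ exists y : X, dominates f y x.

Definition weakly_pareto_optimal (f : 'I_m -> X -> R) (x : X) : Prop :=
  ~ exists y : X, strictly_dominates f y x.

Definition stch_set (K : nat) (f : 'I_m -> X -> R) (lam z mus : 'I_m -> R)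
    (mu : R) (xs : 'I_K -> X) : R :=
  mu * ln (\sum_(i < m)
     expR (lam i * (- (mus i * ln (\sum_(k < K) expR (- f i (xs k) / mus i))) - z i)
           / mu)).

Definition same_solution_set (K : nat) (xs ys : 'I_K -> X) : Prop :=
  forall y : X, (exists k, xs k = y) <-> (exists k, ys k = y).
End Defs.

From HB Require Import structures.
From mathcomp Require Import all_boot all_order all_algebra.
From mathcomp Require Import all_classical all_reals.
From mathcomp Require Import all_analysis.
Import Order.TTheory GRing.Theory Num.Theory.
Set Implicit Arguments.
Unset Strict Implicit.
Unset Printing Implicit Defensive.
Local Open Scope ring_scope.

(* The scalarization is a smooth maximum, over the objectives, of the weighted
   smooth minima over the K solutions.  Both smoothings are monotone, and the
   outer one is strictly monotone in every objective of positive weight, of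
   which there is one since the weights sum to 1.  So replacing a solution of
   an optimal set by a solution dominating it keeps the set optimal, and makes
   the value drop strictly when the gain is strict in an objective of positive
   weight; this rules out strict domination, and domination when all weights
   are positive.  If the optimal set is unique, replacing every occurrence of
   a dominated solution x by its dominator yields an optimal set without x. *)

Lemma ltr_sum_le_lt (R : numDomainType) n (F G : 'I_n -> R) (j : 'I_n) :
  (forall i, F i <= G i) -> F j < G j -> \sum_(i < n) F i < \sum_(i < n) G i.
Proof.
move=> FG FGj; rewrite (bigD1 j) //= [X in _ < X](bigD1 j) //=.
by rewrite ltr_leD // ler_sum.
Qed.

Section SmoothMax.
Variable R : realType.

Definition smooth_max (mu : R) n (F : 'I_n -> R) : R :=
  mu * ln (\sum_(i < n) expR (F i / mu)).

Definition smooth_min (mu : R) n (F : 'I_n -> R) : R :=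
  - smooth_max mu (fun i => - F i).

Variable mu : R.
Hypothesis mu_gt0 : 0 < mu.

Lemma sum_expR_gt0 n (F : 'I_n.+1 -> R) : 0 < \sum_(i < n.+1) expR (F i).
Proof. by rewrite big_ord_recl ltr_pwDl ?expR_gt0 // sumr_ge0. Qed.

Lemma ler_smooth_max n (F G : 'I_n -> R) :
  (forall i, F i <= G i) -> smooth_max mu F <= smooth_max mu G.
Proof.
case: n F G => [|n] F G FG; first by rewrite /smooth_max !big_ord0.
rewrite ler_pM2l // ler_ln ?posrE ?sum_expR_gt0 // ler_sum // => i _.
by rewrite ler_expR ler_pM2r ?invr_gt0.
Qed.

Lemma ltr_smooth_max n (F G : 'I_n -> R) (j : 'I_n) :
  (forall i, F i <= G i) -> F j < G j -> smooth_max mu F < smooth_max mu G.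
Proof.
case: n F G j => [|n] F G j FG FGj; first by case: (j).
rewrite ltr_pM2l // ltr_ln ?posrE ?sum_expR_gt0 //.
apply: (ltr_sum_le_lt (j := j)) => [i|]; first by rewrite ler_expR ler_pM2r ?invr_gt0.
by rewrite ltr_expR ltr_pM2r ?invr_gt0.
Qed.

Lemma ler_smooth_min n (F G : 'I_n -> R) :
  (forall i, F i <= G i) -> smooth_min mu F <= smooth_min mu G.
Proof. by move=> FG; rewrite lerN2 ler_smooth_max // => i; rewrite lerN2. Qed.

Lemma ltr_smooth_min n (F G : 'I_n -> R) (j : 'I_n) :
  (forall i, F i <= G i) -> F j < G j -> smooth_min mu F < smooth_min mu G.
Proof.
move=> FG FGj; rewrite ltrN2 (ltr_smooth_max (j := j)) ?ltrN2 // => i.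
by rewrite lerN2.
Qed.

End SmoothMax.

Section Substitution.
Variables (R : realType) (m K : nat) (X : Type) (f : 'I_m -> X -> R).

Definition substitute (xs : 'I_K -> X) (x y : X) : 'I_K -> X :=
  fun k => if pselect (xs k = x) then y else xs k.

Lemma substitute_ge xs x y :
  (forall i, f i y <= f i x) -> forall i k, f i (substitute xs x y k) <= f i (xs k).
Proof. by move=> yx i k; rewrite /substitute; case: pselect => /= [->|]. Qed.

Lemma substituteE xs x y k : xs k = x -> substitute xs x y k = y.
Proof. by rewrite /substitute; case: pselect. Qed.

Lemma substitute_eq xs x y k : substitute xs x y k = x -> y = x.
Proof. by rewrite /substitute; case: pselect. Qed.

End Substitution.

Section StchSet.
Variables (R : realType) (m K : nat) (X : Type) (f : 'I_m -> X -> R).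
Variables (lam z mus : 'I_m -> R) (mu : R).
Hypotheses (lam_ge0 : forall i, 0 <= lam i) (mu_gt0 : 0 < mu).
Hypothesis mus_gt0 : forall i, 0 < mus i.

Let g : ('I_K -> X) -> R := stch_set f lam z mus mu.

Lemma stch_setE xs :
  g xs = smooth_max mu (fun i => lam i * (smooth_min (mus i) (fun k => f i (xs k)) - z i)).
Proof. by []. Qed.

Lemma ler_stch_set xs ys :
  (forall i k, f i (ys k) <= f i (xs k)) -> g ys <= g xs.
Proof.
move=> yx; rewrite !stch_setE ler_smooth_max // => i.
by rewrite ler_wpM2l // lerD2r ler_smooth_min.
Qed.

Lemma ltr_stch_set xs ys j k :
  (forall i k, f i (ys k) <= f i (xs k)) -> 0 < lam j -> f j (ys k) < f j (xs k) ->
  g ys < g xs.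
Proof.
move=> yx lamj yxj; rewrite !stch_setE (ltr_smooth_max mu_gt0 (j := j)) // => [i|].
  by rewrite ler_wpM2l // lerD2r ler_smooth_min.
by rewrite ltr_pM2l // ltrD2r (ltr_smooth_min (mus_gt0 j) (j := k)).
Qed.

Lemma minimizer_substitute xs k y : (forall ys, g xs <= g ys) ->
  (forall i, f i y <= f i (xs k)) -> forall ys, g (substitute xs (xs k) y) <= g ys.
Proof.
move=> xs_opt yx ys.
exact: le_trans (ler_stch_set (substitute_ge xs yx)) (xs_opt ys).
Qed.

Lemma minimizer_no_strict_gain xs k y j : (forall ys, g xs <= g ys) ->
  (forall i, f i y <= f i (xs k)) -> 0 < lam j -> ~ f j y < f j (xs k).
Proof.
move=> xs_opt yx lamj yxj; have := xs_opt (substitute xs (xs k) y).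
by rewrite leNgt (ltr_stch_set (k := k) (substitute_ge xs yx) lamj) ?substituteE.
Qed.

End StchSet.

Theorem theorem2 (R : realType) (m K : nat) (X : Type) (f : 'I_m -> X -> R)
    (lam z mus : 'I_m -> R) (mu : R)
    (hK : (1 <= K)%N)
    (hlam0 : forall i, 0 <= lam i) (hlam1 : \sum_(i < m) lam i = 1)
    (hmu : 0 < mu) (hmus : forall i, 0 < mus i)
    (xs : 'I_K -> X)
    (hopt : forall ys : 'I_K -> X, stch_set f lam z mus mu xs <= stch_set f lam z mus mu ys) :
  (forall k, weakly_pareto_optimal f (xs k)) /\
  ((forall ys : 'I_K -> X,
      (forall zs : 'I_K -> X, stch_set f lam z mus mu ys <= stch_set f lam z mus mu zs) ->
      same_solution_set ys xs) ->
   forall k, pareto_optimal f (xs k)) /\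
  ((forall i, 0 < lam i) -> forall k, pareto_optimal f (xs k)).
Proof.
have [j /andP[_ lamj]] : exists j, true && (0 < lam j).
  by apply: psumr_neq0P => //; rewrite hlam1 => /eqP; rewrite oner_eq0.
split; [|split] => [k [y yx]|uniq k [y [yx [i yxi]]]|lam_gt0 k [y [yx [i yxi]]]].
- exact: (minimizer_no_strict_gain hlam0 hmu hmus hopt (fun i => ltW (yx i)) lamj (yx j)).
- have ys_opt := minimizer_substitute hlam0 hmu hmus hopt yx.
  have [_ /(_ (ex_intro _ k erefl))[k' ys_k']] := uniq _ ys_opt (xs k).
  by move: yxi; rewrite (substitute_eq ys_k') ltxx.
- exact: (minimizer_no_strict_gain hlam0 hmu hmus hopt yx (lam_gt0 i) yxi).
Qed.
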